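(* Let $\mathcal F=\{F_1,\dots,F_k\}$, $\mathcal I=\{0,1\}^k\setminus\{(0,\dots,0)\}$, and let $\mathcal F_{asc}$ be a nonempty ascending class of nonempty subsets of $\mathcal F$. Let $\mathbf A$ be the matrix with rows indexed by $\mathcal F_{des}=2^{\mathcal F}\setminus\mathcal F_{asc}\setminus\{\varnothing\}$ and columns indexed by $\mathcal I$, with entry $1$ in row $W$, column $\boldsymbol i$ if $W\subseteq\phi(\boldsymbol i)$ and $0$ otherwise. Then the hierarchical AS model $HAS(\mathcal F_{asc})$ is the relational model generated by $\mathbf A$, i.e. $HAS(\mathcal F_{asc})=\{\boldsymbol p>0 \text{ probability distribution on }\mathcal I:\ \log\boldsymbol p=\mathbf A^\top\boldsymbol\beta\text{ for some }\boldsymbol\beta\}$, and this relational model has no overall effect: the all-ones vector of length $2^k-1$ does not belong to the row space of $\mathbf A$.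
   Context: For $\boldsymbol i\in\mathcal I$, $\phi(\boldsymbol i)$ is the set of features whose coordinate in $\boldsymbol i$ equals $1$; write $p(V)$ for the probability of the cell with $\phi(\boldsymbol i)=V$. A class of subsets is ascending if it is closed under taking supersets within $\mathcal F$. For nonempty $V\subseteq\mathcal F$, $\mathrm{CASR}(V\mid\mathcal F\setminus V=\mathbf 0)=\prod_{\varnothing\ne U\subseteq V,\,|U|\equiv|V|\,(2)}p(U)\big/\prod_{\varnothing\ne U\subseteq V,\,|U|\not\equiv|V|\,(2)}p(U)$ (called $\mathrm{ASR}(\mathcal F)$ when $V=\mathcal F$). The hierarchical Aitchison–Silvey model $HAS(\mathcal F_{asc})$ is the set of strictly positive probability distributions $\boldsymbol p$ on $\mathcal I$ with $\mathrm{CASR}(V\mid\mathcal F\setminus V=\mathbf 0)=1$ for all $V\in\mathcal F_{asc}$; equivalently, writing $\log p(\boldsymbol i)=\sum_{\varnothing\ne V\subseteq\phi(\boldsymbol i)}\beta_V$ (a bijective reparameterization), those with $\beta_V=0$ for all $V\in\mathcal F_{asc}$. *)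

From mathcomp Require Import all_boot all_order all_algebra.
From mathcomp Require Import reals exp.
Set Implicit Arguments. Unset Strict Implicit. Unset Printing Implicit Defensive.
Import Order.TTheory GRing.Theory Num.Theory.
Local Open Scope ring_scope.

(* Features F_1..F_k are 'I_k.  A cell i in I = {0,1}^k \ {0} is identified with
   its feature set phi(i) : {set 'I_k}, which is nonempty.  A distribution is a
   function p : {set 'I_k} -> R, only its values on nonempty sets matter. *)

Definition cell k (V : {set 'I_k}) : bool := V != set0.

Definition pos_prob (R : realType) k (p : {set 'I_k} -> R) : Prop :=
  (forall V : {set 'I_k}, cell V -> 0 < p V) /\
  \sum_(V : {set 'I_k} | cell V) p V = 1.

Definition ascending k (Fasc : {set {set 'I_k}}) : Prop :=
  forall U V : {set 'I_k}, U \in Fasc -> U \subset V -> V \in Fasc.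

Definition CASR (R : realType) k (p : {set 'I_k} -> R) (V : {set 'I_k}) : R :=
  (\prod_(U : {set 'I_k} | (U != set0) && (U \subset V) &&
          (odd #|U| == odd #|V|)) p U) /
  (\prod_(U : {set 'I_k} | (U != set0) && (U \subset V) &&
          (odd #|U| != odd #|V|)) p U).

Definition HAS (R : realType) k (Fasc : {set {set 'I_k}}) (p : {set 'I_k} -> R)
  : Prop :=
  pos_prob p /\ forall V, V \in Fasc -> CASR p V = 1.

Definition Fdes k (Fasc : {set {set 'I_k}}) : {set {set 'I_k}} :=
  [set W : {set 'I_k} | (W \notin Fasc) && (W != set0)].

Definition Amat (R : realType) k (W V : {set 'I_k}) : R := (W \subset V)%:R.

Definition relational_model (R : realType) k (Fasc : {set {set 'I_k}})
  (p : {set 'I_k} -> R) : Prop :=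
  pos_prob p /\
  exists beta : {set 'I_k} -> R,
    forall V : {set 'I_k}, cell V ->
      ln (p V) = \sum_(W in Fdes Fasc) Amat R W V * beta W.

Definition ones_in_rowspace (R : realType) k (Fasc : {set {set 'I_k}}) : Prop :=
  exists c : {set 'I_k} -> R,
    forall V : {set 'I_k}, cell V -> \sum_(W in Fdes Fasc) c W * Amat R W V = 1.

(** Taking logarithms turns [CASR(V) = 1] into the vanishing of the alternating
   sum [\sum_(U <= V) (-1)^(|U|+|V|) ln p(U)], which is the Moebius inverse of
   [ln p] on the lattice of nonempty subsets, i.e. the parameter [beta_V].
   Hence [p] is in the model iff [ln p = zeta beta] with [beta] supported on
   [F_des], which is exactly [ln p = A^T beta].  If the all-ones vector were
   [A^T c], Moebius inversion would give [c_V = -(-1)^|V| <> 0] for every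
   [V], contradicting [c_V = 0] for [V] in the nonempty class [F_asc]. *)
From mathcomp Require Import all_boot all_order all_algebra.
From mathcomp Require Import reals exp.
Set Implicit Arguments. Unset Strict Implicit.
Import Order.TTheory GRing.Theory Num.Theory.
Local Open Scope ring_scope.

Section BooleanMoebius.
Variables (T : finType) (R : numDomainType).
Implicit Types (A B U V : {set T}) (g h : {set T} -> R).

(* The Moebius function of the subset lattice: [(-1)^|B :\: A|] for [A \subset B]. *)
Definition mu A B : R := (-1) ^+ (#|A| + #|B|).

Lemma sum_sign_interval_proper A B (n : nat) : A \proper B ->
  \sum_(U : {set T} | (A \subset U) && (U \subset B)) (-1) ^+ (#|U| + n) = 0 :> R.
Proof.
case/properP=> AB [x xB xA].
pose toggle (U : {set T}) := if x \in U then U :\ x else x |: U.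
have toggleK : involutive toggle.
  move=> U; rewrite /toggle; case xU: (x \in U); rewrite !inE eqxx /=.
    exact: setD1K.
  by rewrite setU1K ?xU.
set S := \sum_(U : {set T} | _) _.
suff : S = - S by move/eqP; rewrite -addr_eq0 -mulr2n mulrn_eq0 => /eqP.
rewrite {1}/S (reindex_inj (inv_inj toggleK)) -sumrN; apply: eq_big => U.
  rewrite /toggle; case: ifP => xU.
    by rewrite subsetD1 xA andbT -{4}(setD1K xU) subUset sub1set xB.
  have -> : (A \subset x |: U) = (A \subset (x |: U) :\ x).
    by rewrite subsetD1 xA andbT.
  by rewrite setU1K ?xU // subUset sub1set xB.
rewrite /toggle; case: ifP => xU _.
  by rewrite [in RHS](cardsD1 x U) xU addSn exprS mulN1r opprK.
by rewrite cardsU1 xU addSn exprS mulN1r.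
Qed.

Lemma sum_sign_interval A B (n : nat) : A \subset B ->
  \sum_(U : {set T} | (A \subset U) && (U \subset B)) (-1) ^+ (#|U| + n)
  = (A == B)%:R * (-1) ^+ (#|B| + n) :> R.
Proof.
move=> AB; have [<-|neqAB] := eqVneq A B.
  by rewrite mul1r (big_pred1 A) // => U /=; rewrite eqEsubset andbC.
by rewrite mul0r sum_sign_interval_proper // properEneq neqAB.
Qed.

Lemma sum_mu_lower A B : A \subset B ->
  \sum_(U : {set T} | (A \subset U) && (U \subset B)) mu U B = (A == B)%:R.
Proof.
by move=> AB; rewrite sum_sign_interval // addnn -signr_odd odd_double mulr1.
Qed.

Lemma sum_mu_upper A B : A \subset B ->
  \sum_(U : {set T} | (A \subset U) && (U \subset B)) mu A U = (A == B)%:R.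
Proof.
move=> AB; under eq_bigr do rewrite /mu addnC.
rewrite sum_sign_interval //; have [->|] := eqVneq A B; last by rewrite mul0r.
by rewrite addnn -signr_odd odd_double mulr1.
Qed.

Definition zeta h V : R := \sum_(U : {set T} | (U != set0) && (U \subset V)) h U.

Definition moebius g V : R :=
  \sum_(U : {set T} | (U != set0) && (U \subset V)) mu U V * g U.

Lemma exchange_nonempty_chain (F : {set T} -> {set T} -> R) V :
  \sum_(U : {set T} | (U != set0) && (U \subset V))
     \sum_(A : {set T} | (A != set0) && (A \subset U)) F A U
  = \sum_(A : {set T} | (A != set0) && (A \subset V))
     \sum_(U : {set T} | (A \subset U) && (U \subset V)) F A U.
Proof.
rewrite (exchange_big_dep (fun A => (A != set0) && (A \subset V))) /=; last first.
  by move=> U A /andP[_ UV] /andP[A0 AU]; rewrite A0 (subset_trans AU UV).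
apply: eq_bigr => A /andP[A0 _]; apply: eq_bigl => U.
case AU: (A \subset U); rewrite ?andbF // andbT.
have U0 : U != set0 by apply: contraNneq A0 => U0; rewrite -subset0 -U0.
by rewrite A0 U0 andbT.
Qed.

Lemma sum_delta h V : V != set0 ->
  \sum_(A : {set T} | (A != set0) && (A \subset V)) (A == V)%:R * h A = h V.
Proof.
move=> V0; rewrite (bigD1 V) ?V0 ?subxx //= eqxx mul1r big1 ?addr0 //.
by move=> A /andP[_ /negbTE ->]; rewrite mul0r.
Qed.

Lemma moebius_zeta h V : V != set0 -> moebius (zeta h) V = h V.
Proof.
move=> V0; rewrite /moebius; under eq_bigr do rewrite /zeta mulr_sumr.
rewrite exchange_nonempty_chain -[RHS](sum_delta h V0).
by apply: eq_bigr => A /andP[_ AV]; rewrite -mulr_suml sum_mu_lower.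
Qed.

Lemma zeta_moebius g V : V != set0 -> zeta (moebius g) V = g V.
Proof.
move=> V0; rewrite /zeta /moebius exchange_nonempty_chain.
rewrite -[RHS](sum_delta g V0).
by apply: eq_bigr => A /andP[_ AV]; rewrite -mulr_suml sum_mu_upper.
Qed.

Lemma moebius_one_neq0 g V : V != set0 ->
  (forall U, U != set0 -> g U = 1) -> moebius g V != 0.
Proof.
move=> V0 g1; rewrite /moebius.
under eq_bigr => U /andP[U0 _] do rewrite g1 // mulr1.
rewrite (eq_bigl (fun U => (set0 \subset U) && (U \subset V) && (U != set0))).
  have := sum_mu_lower (sub0set V).
  rewrite eq_sym (negbTE V0) (bigD1 set0) ?sub0set //= => /eqP.
  by rewrite addrC addr_eq0 => /eqP->; rewrite oppr_eq0 signr_eq0.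
by move=> U; rewrite sub0set andbC.
Qed.

End BooleanMoebius.

Section LogLinear.
Variables (R : realType) (k : nat).
Implicit Types (p : {set 'I_k} -> R) (Fasc : {set {set 'I_k}}).

Lemma ln_prod (I : finType) (P : pred I) (F : I -> R) :
  (forall i, P i -> 0 < F i) ->
  ln (\prod_(i | P i) F i) = \sum_(i | P i) ln (F i).
Proof.
apply: (big_morph_in Num.pos (@ln R)) => [x y x0 y0||x y x0 y0|].
- by rewrite posrE mulr_gt0.
- by rewrite posrE.
- by rewrite lnM.
- exact: ln1.
Qed.

Lemma ln_CASR p V : (forall U, U != set0 -> 0 < p U) ->
  0 < CASR p V /\ ln (CASR p V) = moebius (fun U => ln (p U)) V.
Proof.
move=> p_gt0; pose even_part (U : {set 'I_k}) := odd #|U| == odd #|V|.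
have gt0 (c : pred {set 'I_k}) U : (U != set0) && (U \subset V) && c U -> 0 < p U.
  by case/andP=> /andP[/p_gt0].
have prod_gt0 (c : pred {set 'I_k}) :
    0 < \prod_(U : {set 'I_k} | (U != set0) && (U \subset V) && c U) p U.
  exact/prodr_gt0/gt0.
have [P0 Q0] := (prod_gt0 even_part, prod_gt0 (predC even_part)).
split; first exact: divr_gt0.
rewrite /CASR ln_div ?posrE //.
rewrite (ln_prod (gt0 even_part)) (ln_prod (gt0 (predC even_part))).
rewrite /moebius [RHS](bigID even_part) /= -sumrN.
congr (_ + _); apply: eq_bigr => U /andP[_]; rewrite /mu -signr_odd oddD /even_part.
  by move/eqP ->; rewrite addbb mul1r.
by case: odd; case: odd => //; rewrite mulN1r.
Qed.

Lemma CASR_eq1 p V : (forall U, U != set0 -> 0 < p U) ->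
  (CASR p V == 1) = (moebius (fun U => ln (p U)) V == 0).
Proof. by move=> /(ln_CASR V)[C0 <-]; rewrite ln_eq0. Qed.

Lemma sum_Amat Fasc (b : {set 'I_k} -> R) V :
  \sum_(W in Fdes Fasc) Amat R W V * b W
  = zeta (fun W => if W \in Fasc then 0 else b W) V.
Proof.
rewrite /zeta big_mkcond [RHS]big_mkcond; apply: eq_bigr => W _.
rewrite /Amat /Fdes inE.
by case: (W \in Fasc); case: (W == set0); case: (W \subset V); rewrite ?mul1r ?mul0r.
Qed.

End LogLinear.

Theorem theorem4 (R : realType) (k : nat) (Fasc : {set {set 'I_k}}) :
  Fasc != set0 ->
  (forall U, U \in Fasc -> U != set0) ->
  ascending Fasc ->
  (forall p : {set 'I_k} -> R, HAS Fasc p <-> relational_model Fasc p) /\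
  ~ ones_in_rowspace R Fasc.
Proof.
move=> /set0Pn[V VF] Fasc_neq0 _; split=> [p|[c hc]].
  split=> [[[p_gt0 p1] CASR1]|[[p_gt0 p1] [beta hbeta]]]; split=> //.
    exists (moebius (fun U => ln (p U))) => U U0.
    rewrite sum_Amat -[LHS](zeta_moebius (fun U => ln (p U)) U0).
    apply: eq_bigr => W _.
    by case: ifP => // /CASR1/eqP; rewrite CASR_eq1 // => /eqP.
  move=> U UF; apply/eqP; rewrite CASR_eq1 //.
  have := moebius_zeta (fun W => if W \in Fasc then 0 else beta W) (Fasc_neq0 U UF).
  rewrite UF => <-; apply/eqP/eq_bigr => W /andP[W0 _].
  by rewrite hbeta // sum_Amat.
pose c' W := if W \in Fasc then 0 else c W.
have zeta_c' W : W != set0 -> zeta c' W = 1.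
  move=> W0; rewrite -sum_Amat -[RHS](hc W W0).
  by apply: eq_bigr => X _; rewrite mulrC.
suff : moebius (zeta c') V != 0 by rewrite moebius_zeta ?Fasc_neq0 // /c' VF eqxx.
exact: moebius_one_neq0 (Fasc_neq0 V VF) zeta_c'.
Qed.
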